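(* Let $X_1,\ldots,X_n$ be nonnegative random variables with no ties. For every $A\subseteq[n]$ and $k\in[n]$, $$\Pr\Big(X_{k:n}=\min_{i\in A}X_i\Big)=\sum_{B\supseteq A,\ |B|=n-k+1}q(B)-\sum_{B\supseteq A,\ |B|=n-k}q(B),$$ and for any semicoherent structure function $\phi$ on $[n]$ with system lifetime $T$, and every $k\in\{0,\ldots,n\}$ (with $X_{0:n}:=0$... more precisely for $k\in[n]$), $$\Pr(T>X_{k:n})=\sum_{|A|=n-k}q(A)\,\phi(A)=\sum_{A\subseteq[n]}m_\phi(A)\,\Pr\Big(X_{k:n}<\min_{i\in A}X_i\Big).$$
   Context: No ties: $\Pr(X_i=X_k)=0$ for $i\neq k$. $X_{k:n}$ is the $k$th smallest of $X_1,\ldots,X_n$. For $A\subseteq[n]$, $q(A)=\Pr\big(\max_{i\notin A}X_i<\min_{i\in A}X_i\big)$ (empty max $=-\infty$, empty min $=+\infty$), the probability that the $|A|$ longest-lived components are exactly those in $A$. A semicoherent structure function $\phi:2^{[n]}\to\{0,1\}$ (subsets identified with Boolean vectors) is nondecreasing with $\phi(\varnothing)=0$, $\phi([n])=1$; the system lifetime is $T=\inf\{t\geq0:\phi(\{i:X_i>t\})=0\}$. Möbius transform: $m_\phi(A)=\sum_{B\subseteq A}(-1)^{|A|-|B|}\phi(B)$. *)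

From Stdlib Require Import Reals.
From mathcomp Require Import all_boot.

Set Implicit Arguments.
Unset Strict Implicit.
Unset Printing Implicit Defensive.

Local Open Scope R_scope.

(* A (finitely additive) probability space: a Boolean algebra of events [ev]
   on [Omega] (events are predicates on Omega) and a probability [pr]. *)
Record probSpace (Omega : Type) := ProbSpace {
  ev : (Omega -> Prop) -> Prop;
  pr : (Omega -> Prop) -> R;
  ev_ext : forall E F : Omega -> Prop,
      (forall w, E w <-> F w) -> ev E -> ev F;
  ev_full : ev (fun _ => True);
  ev_compl : forall E, ev E -> ev (fun w => ~ E w);
  ev_inter : forall E F, ev E -> ev F -> ev (fun w => E w /\ F w);
  pr_ext : forall E F : Omega -> Prop,
      (forall w, E w <-> F w) -> pr E = pr F;
  pr_nonneg : forall E, ev E -> 0 <= pr E;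
  pr_full : pr (fun _ => True) = 1;
  pr_add : forall E F, ev E -> ev F -> (forall w, E w -> F w -> False) ->
      pr (fun w => E w \/ F w) = pr E + pr F
}.

Definition Rleb (x y : R) : bool := if Rle_dec x y then true else false.

(* k-th smallest of X_1(w), ..., X_n(w)  (k is 1-based: k in 1..n). *)
Definition ostat (n : nat) (Omega : Type) (X : 'I_n -> Omega -> R)
    (k : nat) (w : Omega) : R :=
  nth 0 (sort Rleb [seq X i w | i <- enum 'I_n]) k.-1.

(* Event: v = min_{i in A} X_i(w)   (empty min = +infinity, so false if A = set0). *)
Definition eq_minA (n : nat) (Omega : Type) (X : 'I_n -> Omega -> R)
    (A : {set 'I_n}) (v : R) (w : Omega) : Prop :=
  (exists i, i \in A /\ X i w = v) /\ (forall i, i \in A -> v <= X i w).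

(* Event: v < min_{i in A} X_i(w)   (true if A = set0). *)
Definition lt_minA (n : nat) (Omega : Type) (X : 'I_n -> Omega -> R)
    (A : {set 'I_n}) (v : R) (w : Omega) : Prop :=
  forall i, i \in A -> v < X i w.

Definition qA (n : nat) (Omega : Type) (P : probSpace Omega)
    (X : 'I_n -> Omega -> R) (A : {set 'I_n}) : R :=
  pr P (fun w => forall i j, i \notin A -> j \in A -> X i w < X j w).

Definition sumR (T : finType) (p : pred T) (F : T -> R) : R :=
  \big[Rplus/0]_(x | p x) F x.

Definition semicoherent (n : nat) (phi : {set 'I_n} -> bool) : Prop :=
  (forall A B : {set 'I_n}, A \subset B -> phi A -> phi B) /\
  phi set0 = false /\ phi setT = true.

Definition b2R (b : bool) : R := if b then 1 else 0.

Definition mobius (n : nat) (phi : {set 'I_n} -> bool) (A : {set 'I_n}) : R :=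
  sumR (fun B : {set 'I_n} => B \subset A)
       (fun B => (-1) ^ (#|A| - #|B|)%nat * b2R (phi B)).

Definition is_glb (S : R -> Prop) (m : R) : Prop :=
  (forall t, S t -> m <= t) /\ (forall m', (forall t, S t -> m' <= t) -> m' <= m).

Definition is_lifetime (n : nat) (Omega : Type) (phi : {set 'I_n} -> bool)
    (X : 'I_n -> Omega -> R) (T : Omega -> R) : Prop :=
  forall w, is_glb (fun t => 0 <= t /\ phi [set i | Rleb (X i w) t == false] = false)
                   (T w).

From Stdlib Require Import Reals Lra Classical.
From mathcomp Require Import all_boot.
From mathcomp Require Import zify.
From HB Require Import structures.

Set Implicit Arguments.
Unset Strict Implicit.
Unset Printing Implicit Defensive.

(* Fix an outcome w without ties and let top_m(w) be the set of the m
   longest-lived components.  Two pointwise facts drive the proof: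
   X_i > X_{k:n} iff i lies in top_{n-k}, and X_i >= X_{k:n} iff i lies in
   top_{n-k+1}.  Moreover top_m(w) is the only set of size m lying above its
   complement, so for every property Q of sets
       Pr(Q(top_m)) = sum_{|B| = m, Q(B)} q(B)            (lemma pr_top).
   - First formula: up to ties, {X_{k:n} = min_A X} is the difference of the
     nested events {A in top_{n-k+1}} and {A in top_{n-k}}.
   - Second formula: for a monotone phi, T > X_{k:n} iff phi(top_{n-k}); this
     gives the q-expansion, and Moebius inversion phi(B) = sum_{A in B} m_phi(A)
     together with {X_{k:n} < min_A X} = {A in top_{n-k}} gives the other one. *)

Local Open Scope R_scope.

(* Addition and multiplication of reals as monoid laws, so that the generic
   big-operator lemmas apply to [sumR]. *)
HB.instance Definition _ := Monoid.isComLaw.Build R 0 Rplus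
  (fun a b c => esym (Rplus_assoc a b c)) Rplus_comm Rplus_0_l.
HB.instance Definition _ := Monoid.isMulLaw.Build R 0 Rmult Rmult_0_l Rmult_0_r.
HB.instance Definition _ :=
  Monoid.isAddLaw.Build R Rmult Rplus Rmult_plus_distr_r Rmult_plus_distr_l.

Section FinitelyAdditiveProbability.
Variables (Omega : Type) (P : probSpace Omega).
Implicit Types E F : Omega -> Prop.

Lemma ev_empty : ev P (fun _ => False).
Proof. by apply: ev_ext (ev_compl (ev_full P)) => w; tauto. Qed.

Lemma ev_const (Q : Prop) : ev P (fun _ => Q).
Proof.
case: (classic Q) => HQ.
  by apply: ev_ext (ev_full P) => w; tauto.
by apply: ev_ext ev_empty => w; tauto.
Qed.

Lemma ev_or E F : ev P E -> ev P F -> ev P (fun w => E w \/ F w).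
Proof.
move=> HE HF; apply: ev_ext (ev_compl (ev_inter (ev_compl HE) (ev_compl HF))).
by move=> w; tauto.
Qed.

Lemma ev_imp E F : ev P E -> ev P F -> ev P (fun w => E w -> F w).
Proof. by move=> HE HF; apply: ev_ext (ev_or (ev_compl HE) HF) => w; tauto. Qed.

Lemma ev_forall_seq (T : eqType) (E : T -> Omega -> Prop) (s : seq T) :
  (forall x, ev P (E x)) -> ev P (fun w => forall x, x \in s -> E x w).
Proof.
move=> HE; elim: s => [|a s IH].
  by apply: ev_ext (ev_full P) => w; split=> // _ x; rewrite in_nil.
apply: ev_ext (ev_inter (HE a) IH) => w; split.
  by move=> [Ea Es] x; rewrite inE => /predU1P [->|/Es].
by move=> H; split=> [|x xs]; apply: H; rewrite inE ?eqxx ?xs ?orbT.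
Qed.

Lemma ev_exists_seq (T : eqType) (E : T -> Omega -> Prop) (s : seq T) :
  (forall x, ev P (E x)) -> ev P (fun w => exists x, x \in s /\ E x w).
Proof.
move=> HE; have := ev_compl (ev_forall_seq s (fun x => ev_compl (HE x))).
apply: ev_ext => w; split; last by move=> [x [xs Ex]] /(_ x xs).
move=> notall; apply: NNPP => noex; apply: notall => x xs Ex.
by apply: noex; exists x.
Qed.

Lemma ev_forall (T : finType) (E : T -> Omega -> Prop) :
  (forall x, ev P (E x)) -> ev P (fun w => forall x, E x w).
Proof.
move=> /(ev_forall_seq (enum T)); apply: ev_ext => w.
by split=> H x; [apply: H; rewrite mem_enum|move=> _; apply: H].
Qed.

Lemma ev_exists (T : finType) (E : T -> Omega -> Prop) :
  (forall x, ev P (E x)) -> ev P (fun w => exists x, E x w).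
Proof.
move=> /(ev_exists_seq (enum T)); apply: ev_ext => w.
by split=> [[x [_ Ex]]|[x Ex]]; exists x; rewrite ?mem_enum.
Qed.

(* A random finite set F is measurable as soon as each membership event is:
   then every property of F is an event, since F takes finitely many values. *)
Lemma ev_random_set (T : finType) (F : Omega -> {set T}) :
  (forall x, ev P (fun w => x \in F w)) ->
  forall Q : {set T} -> Prop, ev P (fun w => Q (F w)).
Proof.
move=> HF Q.
have : ev P (fun w => exists S, Q S /\ forall x, (x \in F w) = (x \in S)).
  apply: ev_exists => S; apply: ev_inter (ev_const _) _.
  apply: ev_forall => x; case: (x \in S).
    by apply: ev_ext (HF x) => w; split=> [->|->].
  by apply: ev_ext (ev_compl (HF x)) => w; split=> [/negP/negbTE|->].
apply: ev_ext => w; split; last by exists (F w).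
by move=> [S [QS FS]]; have -> : F w = S by apply/setP => x; apply: FS.
Qed.

Lemma pr_empty : pr P (fun _ => False) = 0.
Proof.
have := pr_add ev_empty ev_empty (fun _ (f : False) _ => f).
by rewrite (@pr_ext _ P _ (fun _ => False)) => [|w]; [lra|tauto].
Qed.

Lemma pr_split E F : ev P E -> ev P F ->
  pr P E = pr P (fun w => E w /\ F w) + pr P (fun w => E w /\ ~ F w).
Proof.
move=> HE HF; rewrite -pr_add; [|exact: ev_inter|exact: ev_inter (ev_compl HF)|].
  by apply: pr_ext => w; split=> [Ew|]; [case: (classic (F w)); tauto|tauto].
by move=> w [_ ?] [_ ?].
Qed.

Lemma pr_mono E F : ev P E -> ev P F -> (forall w, E w -> F w) ->
  pr P E <= pr P F.
Proof.
move=> HE HF EF; rewrite (pr_split HF HE).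
rewrite (@pr_ext _ P (fun w => F w /\ E w) E) => [|w]; last by split=> [[]|/[dup] /EF].
by have := pr_nonneg (ev_inter HF (ev_compl HE)); lra.
Qed.

Lemma pr_sum_seq (T : eqType) (E : T -> Omega -> Prop) (s : seq T) :
  uniq s -> (forall x, ev P (E x)) ->
  (forall x y w, x \in s -> y \in s -> x != y -> E x w -> E y w -> False) ->
  pr P (fun w => exists x, x \in s /\ E x w) = \big[Rplus/0]_(x <- s) pr P (E x).
Proof.
move=> + HE; elim: s => [|a s IH] /=.
  by move=> _ _; rewrite big_nil -pr_empty; apply: pr_ext => w; split=> // -[x []].
move=> /andP [as_ us] disj; rewrite big_cons -IH //; last first.
  by move=> x y w xs ys; apply: disj; rewrite inE ?xs ?ys orbT.
rewrite -(pr_add (HE a) (ev_exists_seq s HE)).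
  apply: pr_ext => w; split=> [[x []]|[Ea|[x [xs Ex]]]].
  - by rewrite inE => /predU1P [->|xs] Ex; [left|right; exists x].
  - by exists a; rewrite inE eqxx.
  - by exists x; rewrite inE xs orbT.
move=> w Ea [x [xs Ex]]; apply: (disj a x w) => //; rewrite ?inE ?eqxx ?xs ?orbT //.
by apply: contraNneq as_ => ->.
Qed.

Lemma pr_sum (T : finType) (p : pred T) (E : T -> Omega -> Prop) :
  (forall x, ev P (E x)) ->
  (forall x y w, p x -> p y -> x != y -> E x w -> E y w -> False) ->
  pr P (fun w => exists x, p x /\ E x w) = sumR p (fun x => pr P (E x)).
Proof.
move=> HE disj; rewrite /sumR -big_filter -pr_sum_seq ?filter_uniq ?index_enum_uniq //.
  apply: pr_ext => w; split=> [[x [px Ex]]|[x []]].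
    by exists x; rewrite mem_filter px mem_index_enum.
  by rewrite mem_filter => /andP [px _] Ex; exists x.
by move=> x y w; rewrite !mem_filter => /andP [px _] /andP [py _]; apply: disj.
Qed.

Lemma pr_or_le E F : ev P E -> ev P F -> pr P (fun w => E w \/ F w) <= pr P E + pr P F.
Proof.
move=> HE HF; have HFE := ev_inter HF (ev_compl HE).
rewrite (@pr_ext _ P _ (fun w => E w \/ (F w /\ ~ E w))); last first.
  by move=> w; split=> [[Ew|Fw]|]; [left|case: (classic (E w)); tauto|tauto].
rewrite pr_add //; last by move=> w ? [].
by have := pr_mono HFE HF (fun w => @proj1 _ _); lra.
Qed.

Lemma pr_null_union (T : finType) (N : T -> Omega -> Prop) :
  (forall x, ev P (N x)) -> (forall x, pr P (N x) = 0) ->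
  pr P (fun w => exists x, N x w) = 0.
Proof.
move=> HN N0.
have null_seq (s : seq T) : pr P (fun w => exists x, x \in s /\ N x w) = 0.
  elim: s => [|a s IH].
    by rewrite -pr_empty; apply: pr_ext => w; split=> // -[x []].
  have HU := ev_exists_seq s HN.
  have := pr_nonneg (ev_exists_seq (a :: s) HN).
  have := pr_or_le (HN a) HU; rewrite IH N0.
  rewrite (@pr_ext _ P (fun w => N a w \/ _) (fun w => exists x, x \in a :: s /\ N x w)).
    by lra.
  move=> w; split=> [[Na|[x [xs Nx]]]|[x []]].
  - by exists a; rewrite inE eqxx.
  - by exists x; rewrite inE xs orbT.
  - by rewrite inE => /predU1P [->|xs] Nx; [left|right; exists x].
rewrite -(null_seq (enum T)); apply: pr_ext => w.
by split=> -[x]; [exists x; rewrite mem_enum|case=> _; exists x].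
Qed.

Section AlmostSurely.
Variable G : Omega -> Prop.
Hypothesis evG : ev P G.
Hypothesis nullG : pr P (fun w => ~ G w) = 0.

Lemma pr_restrict E : ev P E -> pr P E = pr P (fun w => E w /\ G w).
Proof.
move=> HE; rewrite (pr_split HE evG).
have := pr_mono (ev_inter HE (ev_compl evG)) (ev_compl evG) (fun w => @proj2 _ _).
by have := pr_nonneg (ev_inter HE (ev_compl evG)); lra.
Qed.

Lemma pr_as_eq E F : ev P E -> ev P F -> (forall w, G w -> (E w <-> F w)) ->
  pr P E = pr P F.
Proof.
move=> HE HF EF; rewrite (pr_restrict HE) (pr_restrict HF).
by apply: pr_ext => w; split=> -[? Gw]; split=> //; apply/(EF w Gw).
Qed.

Lemma pr_as_add E F : ev P E -> ev P F -> (forall w, G w -> E w -> F w -> False) ->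
  pr P (fun w => E w \/ F w) = pr P E + pr P F.
Proof.
move=> HE HF disj; rewrite (pr_restrict (ev_or HE HF)) (pr_restrict HE) (pr_restrict HF).
rewrite -pr_add; try exact: ev_inter.
  by apply: pr_ext => w; tauto.
by move=> w [? Gw] [? _]; apply: (disj w Gw).
Qed.
End AlmostSurely.
End FinitelyAdditiveProbability.

Definition Rltb (x y : R) : bool := if Rlt_dec x y then true else false.

Lemma RltbP x y : reflect (x < y) (Rltb x y).
Proof. by rewrite /Rltb; case: Rlt_dec => H; constructor. Qed.

Lemma RlebP x y : reflect (x <= y) (Rleb x y).
Proof. by rewrite /Rleb; case: Rle_dec => H; constructor. Qed.

Lemma Rleb_trans : transitive Rleb.
Proof. by move=> y x z /RlebP xy /RlebP yz; apply/RlebP; lra. Qed.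

Lemma Rleb_total : total Rleb.
Proof.
by move=> x y; apply/orP; case: (Rle_dec x y) => H; [left|right]; apply/RlebP; lra.
Qed.

(* In a nondecreasing list, a predicate closed downwards holds exactly on an
   initial segment, whose length is the number of elements satisfying it. *)
Lemma sorted_nth_downward (p : pred R) s j :
  (forall y z, z <= y -> p y -> p z) ->
  sorted Rleb s -> (j < size s)%N -> p (nth 0 s j) = (j < count p s)%N.
Proof.
move=> p_down; elim: s j => [|a s IH] j //= s_sorted j_lt.
case pa: (p a) => /=.
  case: j j_lt => [|j] j_lt //=; rewrite IH //; exact: path_sorted s_sorted.
have a_min : all (Rleb a) s by apply: order_path_min s_sorted; exact: Rleb_trans.
have tail_false : all (predC p) s.
  by apply: sub_all a_min => y /RlebP ay; apply/negP => /(p_down _ _ ay); rewrite pa.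
have -> : count p s = 0%N.
  by apply/eqP; rewrite -leqn0 leqNgt -has_count -all_predC.
by case: j j_lt => [|j] j_lt //=; apply/negbTE; exact: (all_nthP 0 tail_false).
Qed.

Section OrderStatistics.
Variable n : nat.
Implicit Types (x : 'I_n -> R) (B : {set 'I_n}).

Definition ost x k : R := nth 0 (sort Rleb [seq x i | i <- enum 'I_n]) k.-1.

Definition rank x i : nat := #|[set j | Rltb (x j) (x i)]|.

(* The set of the m components of highest rank (the m longest lived). *)
Definition top x m : {set 'I_n} := [set i | n - m <= rank x i]%N.

(* B lies strictly above its complement: the event whose probability is q(B). *)
Definition above x B : Prop := forall i j, i \notin B -> j \in B -> x i < x j.

Definition no_ties x : Prop := forall i j, i != j -> x i <> x j.

Lemma ost_count x k (p : pred R) :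
  (forall y z, z <= y -> p y -> p z) -> (1 <= k <= n)%N ->
  p (ost x k) = (k <= #|[set i | p (x i)]|)%N.
Proof.
move=> p_down /andP [k_pos k_le].
rewrite /ost sorted_nth_downward //; last 2 first.
- exact: sort_sorted Rleb_total _.
- by rewrite size_sort size_map size_enum_ord; case: k k_pos k_le.
rewrite count_sort count_map cardsE cardE size_filter -enumT.
by case: k k_pos k_le => //= k _ _; congr (_ < _)%N; apply: eq_count.
Qed.

Lemma ost_lt x k y : (1 <= k <= n)%N ->
  ost x k < y <-> (k <= #|[set i | Rltb (x i) y]|)%N.
Proof.
move=> k_range; rewrite -(@ost_count x k (fun z => Rltb z y)) //.
  by split=> /RltbP.
by move=> a b ba /RltbP ay; apply/RltbP; lra.
Qed.

Lemma ost_le x k y : (1 <= k <= n)%N ->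
  ost x k <= y <-> (k <= #|[set i | Rleb (x i) y]|)%N.
Proof.
move=> k_range; rewrite -(@ost_count x k (fun z => Rleb z y)) //.
  by split=> /RlebP.
by move=> a b ba /RlebP ay; apply/RlebP; lra.
Qed.

Lemma ost_nonneg x k : (forall i, 0 <= x i) -> (1 <= k <= n)%N -> 0 <= ost x k.
Proof.
move=> x_ge0 k_range; apply: Rnot_lt_le => /(@ost_lt x k 0 k_range).
have -> : [set i | Rltb (x i) 0] = set0.
  by apply/setP => i; rewrite !inE; apply/negbTE/RltbP; have := x_ge0 i; lra.
by move: k_range; rewrite cards0; lia.
Qed.

Lemma rank_lt x i j : x j < x i -> (rank x j < rank x i)%N.
Proof.
move=> ji; apply: proper_card; apply/properP; split.
  by apply/subsetP => l; rewrite !inE => /RltbP lj; apply/RltbP; lra.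
by exists j; rewrite !inE; apply/RltbP; lra.
Qed.

Lemma rank_bound x i : (rank x i < n)%N.
Proof.
rewrite -[X in (_ < X)%N]card_ord -cardsT; apply: proper_card; apply/properP.
by split; [exact: subsetT|exists i; rewrite !inE //; apply/RltbP; lra].
Qed.

Lemma top_mono x m : top x m \subset top x m.+1.
Proof. by apply/subsetP => i; rewrite !inE; apply: leq_trans; rewrite leq_sub2l. Qed.

Lemma above_top x B : above x B -> B = top x #|B|.
Proof.
move=> B_above; have cardC : #|~: B| = (n - #|B|)%N by rewrite cardsCs setCK card_ord.
apply/setP => i; rewrite inE -cardC; case iB: (i \in B).
  apply/esym/subset_leq_card/subsetP => l; rewrite !inE => lB.
  by apply/RltbP; apply: B_above.
apply/esym/negbTE; rewrite -ltnNge; apply: proper_card; apply/properP; split.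
  apply/subsetP => l; rewrite !inE => /RltbP li; apply: contraL isT => lB.
  by have := B_above _ _ (negbT iB) lB; lra.
by exists i; rewrite !inE ?iB //; apply/RltbP; lra.
Qed.

Lemma rank_inj x : no_ties x -> injective (rank x).
Proof.
move=> nt i j rij; apply/eqP/negPn/negP => /nt ij.
by case: (Rtotal_order (x i) (x j)) => [/rank_lt|[//|/rank_lt]]; rewrite rij ltnn.
Qed.

Lemma card_le_rank x i : no_ties x -> #|[set j | Rleb (x j) (x i)]| = (rank x i).+1.
Proof.
move=> nt; have -> : [set j | Rleb (x j) (x i)] = i |: [set j | Rltb (x j) (x i)].
  apply/setP => j; rewrite !inE; case: (eqVneq j i) => [->|/nt ji] /=.
    by apply/RlebP; lra.
  by apply/RlebP/RltbP; lra.
rewrite cardsU1 inE; suff /negbTE -> : ~~ Rltb (x i) (x i) by [].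
by apply/RltbP; lra.
Qed.

Lemma card_ge_ord m : (m <= n)%N -> #|[set i : 'I_n | n - m <= i]%N| = m.
Proof.
move=> mn; rewrite cardsE cardE /enum_mem size_filter -enumT /=.
rewrite -(count_map val (fun k => n - m <= k)%N) val_enum_ord.
rewrite -[in iota 0 n](subnK mn) iotaD count_cat add0n.
rewrite (@eq_in_count _ _ pred0) => [|k]; last by rewrite mem_iota add0n /= => lt; rewrite leqNgt lt.
rewrite (@eq_in_count _ _ predT (iota (n - m) m)) => [|k]; last by rewrite mem_iota => /andP [-> _].
by rewrite count_pred0 count_predT size_iota.
Qed.

Lemma top_above x m : no_ties x -> (m <= n)%N -> above x (top x m) /\ #|top x m| = m.
Proof.
move=> nt mn; split.
  move=> i j; rewrite !inE -ltnNge => ri rj.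
  case: (Rtotal_order (x i) (x j)) => [//|[xij|/rank_lt rji]]; exfalso.
    have ij : i != j by apply: contraTneq ri => ->; rewrite -leqNgt.
    exact: nt _ _ ij xij.
  by move: (leq_ltn_trans rj rji); rewrite ltnNge (ltnW ri).
pose r i : 'I_n := Ordinal (rank_bound x i).
have r_inj : injective r by move=> i j /(congr1 val) /= /rank_inj; apply.
rewrite -[RHS](card_ge_ord mn) -(card_preimset _ r_inj).
by apply: eq_card => i; rewrite !inE.
Qed.

End OrderStatistics.

Section Mobius.
Variable n : nat.
Implicit Types A B C : {set 'I_n}.

Definition toggle (x : 'I_n) A : {set 'I_n} := if x \in A then A :\ x else x |: A.

Lemma toggleK x : involutive (toggle x).
Proof.
move=> A; rewrite /toggle; case: (boolP (x \in A)) => xA.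
  by rewrite setD11 setD1K.
by rewrite setU11 setU1K.
Qed.

Lemma toggle_interval x B C A : x \in B -> x \notin C ->
  (toggle x A \subset B) && (C \subset toggle x A) = (A \subset B) && (C \subset A).
Proof.
move=> xB xC; rewrite /toggle; case: ifP => xA.
  by rewrite subsetD1 xC andbT subDset (setUidPr _) ?sub1set.
rewrite subUset sub1set xB -subDset.
suff -> : C :\ x = C by [].
by apply/setDidPl; rewrite disjoint_sym disjoints1.
Qed.

Lemma toggle_sign x C A : x \notin C -> C \subset A ->
  (-1) ^ (#|toggle x A| - #|C|) = - (-1) ^ (#|A| - #|C|).
Proof.
move=> xC CA; rewrite /toggle; case: ifP => xA.
  have CAx : C \subset A :\ x by rewrite subsetD1 CA xC.
  rewrite -[in RHS](setD1K xA) cardsU1 !inE eqxx /= add1n subSn ?subset_leq_card //=.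
  by move: (_ ^ _) => s; lra.
rewrite cardsU1 xA add1n subSn ?subset_leq_card //=.
by move: (_ ^ _) => s; lra.
Qed.

Lemma alternating_interval_sum B C : C \subset B ->
  \big[Rplus/0]_(A : {set 'I_n} | (A \subset B) && (C \subset A)) (-1) ^ (#|A| - #|C|) =
  if C == B then 1 else 0.
Proof.
move=> CB; case: eqVneq => [<-|CneB].
  rewrite (big_pred1 C) ?subnn // => A; rewrite /= -eqEsubset eq_sym //.
have [x xB xC] : exists2 x, x \in B & x \notin C.
  by have /properP [] : C \proper B by rewrite properEneq CneB.
set S := \big[Rplus/0]_(A | _) _.
suff : S = - S by lra.
rewrite {1}/S (reindex_inj (inv_inj (toggleK x))) /=.
rewrite (eq_bigl _ _ (fun A => toggle_interval A xB xC)).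
rewrite (eq_bigr (fun A => - (-1) ^ (#|A| - #|C|))); last first.
  by move=> A /andP [_ CA]; apply: toggle_sign.
by rewrite /S (big_morph Ropp Ropp_plus_distr Ropp_0).
Qed.

Lemma mobius_sum (phi : {set 'I_n} -> bool) B :
  sumR (fun A : {set 'I_n} => A \subset B) (mobius phi) = b2R (phi B).
Proof.
rewrite /sumR /mobius /sumR.
rewrite (exchange_big_dep (fun C : {set 'I_n} => C \subset B)) /=; last first.
  by move=> A C AB CA; apply: subset_trans CA AB.
rewrite (eq_bigr (fun C => (if C == B then 1 else 0) * b2R (phi C))); last first.
  by move=> C CB; rewrite -big_distrl /= alternating_interval_sum.
rewrite (bigD1 B) ?subxx //= eqxx big1; first lra.
by move=> C /andP [_ /negbTE ->]; lra.
Qed.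
End Mobius.

Lemma Rleb_eqF (x t : R) : (Rleb x t == false) = Rltb t x.
Proof. by case: (RlebP x t) => H; case: (RltbP t x) => H' //=; exfalso; lra. Qed.

Lemma uniform_margin n (x : 'I_n -> R) t :
  exists2 eps, 0 < eps & forall i, t < x i -> eps <= x i - t.
Proof.
suff [eps eps_gt0 margin] :
    exists2 eps, 0 < eps & forall i, i \in enum 'I_n -> t < x i -> eps <= x i - t.
  by exists eps => // i; apply: margin; rewrite mem_enum.
elim: (enum 'I_n) => [|a s [e e_gt0 margin]]; first by exists 1 => //; lra.
case: (Rlt_dec t (x a)) => ta.
  exists (Rmin e (x a - t)); first by apply: Rmin_pos; lra.
  move=> i; rewrite inE => /predU1P [->|i_s] ti; first exact: Rmin_r.
  exact: Rle_trans (Rmin_l _ _) (margin i i_s ti).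
by exists e => // i; rewrite inE => /predU1P [->|i_s] ti; [lra|apply: margin].
Qed.

Lemma lifetime_gt n (phi : {set 'I_n} -> bool) (x : 'I_n -> R) (Tw t : R) :
  (forall A B : {set 'I_n}, A \subset B -> phi A -> phi B) ->
  is_glb (fun s => 0 <= s /\ phi [set i | Rleb (x i) s == false] = false) Tw ->
  0 <= t ->
  t < Tw <-> phi [set i | Rltb t (x i)].
Proof.
move=> phi_mono [Tw_lb Tw_glb] t_ge0.
have alive s : [set i | Rleb (x i) s == false] = [set i | Rltb s (x i)].
  by apply/setP => i; rewrite !inE Rleb_eqF.
split=> [tT|phi_t].
  apply: NNPP => /negP/negbTE phiF.
  by have := Tw_lb t (conj t_ge0 (etrans (congr1 phi (alive t)) phiF)); lra.
have [eps eps_gt0 margin] := uniform_margin x t.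
suff : t + eps <= Tw by lra.
apply: Tw_glb => s [s_ge0]; rewrite alive => phi_s; apply: Rnot_lt_le => s_lt.
suff : phi [set i | Rltb s (x i)] by rewrite phi_s.
apply: phi_mono phi_t; apply/subsetP => i; rewrite !inE => /RltbP ti.
by apply/RltbP; have := margin i ti; lra.
Qed.

Section LifetimeOfOrderStatistics.
Variables (n : nat) (Omega : Type) (P : probSpace Omega) (X : 'I_n -> Omega -> R).
Hypothesis X_meas : forall i j, ev P (fun w => X i w < X j w).
Hypothesis X_noties : forall i j, i != j -> pr P (fun w => X i w = X j w) = 0.

Let sample (w : Omega) : 'I_n -> R := fun i => X i w.

Lemma ev_eqX i j : ev P (fun w => X i w = X j w).
Proof.
apply: ev_ext (ev_inter (ev_compl (X_meas i j)) (ev_compl (X_meas j i))) => w.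
by split=> [[]|->]; lra.
Qed.

Lemma ev_below_set i (Q : {set 'I_n} -> Prop) :
  ev P (fun w => Q [set l | Rltb (X l w) (X i w)]).
Proof.
apply: ev_random_set => j; apply: ev_ext (X_meas j i) => w.
by rewrite inE; split=> /RltbP.
Qed.

Lemma ev_not_above_set i (Q : {set 'I_n} -> Prop) :
  ev P (fun w => Q [set l | Rleb (X l w) (X i w)]).
Proof.
apply: ev_random_set => j; apply: ev_ext (ev_compl (X_meas i j)) => w.
by rewrite inE; split=> [?|/RlebP]; [apply/RlebP|]; lra.
Qed.

Lemma ev_top m (Q : {set 'I_n} -> Prop) : ev P (fun w => Q (top (sample w) m)).
Proof.
apply: ev_random_set => i; apply: ev_ext (ev_below_set i (fun S => n - m <= #|S|)%N).
by move=> w; rewrite inE.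
Qed.

Lemma ev_ostat_le k i : (1 <= k <= n)%N -> ev P (fun w => ostat X k w <= X i w).
Proof.
move=> k_range.
apply: ev_ext (ev_not_above_set i (fun S => k <= #|S|)%N) => w.
exact: iff_sym (@ost_le n (sample w) k (X i w) k_range).
Qed.

Lemma ostat_lt_top k w i : (1 <= k <= n)%N ->
  ostat X k w < X i w <-> i \in top (sample w) (n - k).
Proof.
move=> k_range; rewrite (@ost_lt n (sample w) k (X i w) k_range) inE.
by have -> : (n - (n - k) = k)%N by lia.
Qed.

Lemma ev_ostat_lt k i : (1 <= k <= n)%N -> ev P (fun w => ostat X k w < X i w).
Proof.
move=> k_range; apply: ev_ext (ev_top (n - k) (fun S => i \in S)) => w.
exact: iff_sym (ostat_lt_top w i k_range).
Qed.

Lemma ostat_le_top k w i : no_ties (sample w) -> (1 <= k <= n)%N ->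
  ostat X k w <= X i w <-> i \in top (sample w) (n - k + 1).
Proof.
move=> nt k_range; rewrite (@ost_le n (sample w) k (X i w) k_range).
by rewrite (card_le_rank _ nt) inE; move: k_range; case: k => // k; lia.
Qed.

Lemma ev_no_ties : ev P (fun w => no_ties (sample w)).
Proof.
apply: ev_forall => i; apply: ev_forall => j.
exact: ev_imp (ev_const _ _) (ev_compl (ev_eqX i j)).
Qed.

Lemma pr_ties : pr P (fun w => ~ no_ties (sample w)) = 0.
Proof.
pose tie (ij : 'I_n * 'I_n) w := ij.1 != ij.2 /\ X ij.1 w = X ij.2 w.
rewrite (@pr_ext _ P _ (fun w => exists ij, tie ij w)); last first.
  move=> w; split=> [ties|[[i j] [/= ij eq_ij]] /(_ i j ij)] //.
  apply: NNPP => no_tie; apply: ties => i j ij eq_ij; apply: no_tie.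
  by exists (i, j).
apply: pr_null_union => [[i j]|[i j]]; first exact: ev_inter (ev_const _ _) (ev_eqX i j).
rewrite /tie /=; case: (eqVneq i j) => [->|ij]; last first.
  by rewrite -(X_noties ij); apply: pr_ext => w; split=> [[]|].
by rewrite -(pr_empty P); apply: pr_ext => w; split=> -[].
Qed.

Lemma pr_top m (Q : pred {set 'I_n}) : (m <= n)%N ->
  pr P (fun w => Q (top (sample w) m)) =
  sumR (fun B : {set 'I_n} => (#|B| == m) && Q B) (qA P X).
Proof.
move=> mn; pose p (B : {set 'I_n}) := (#|B| == m) && Q B.
have ev_above B : ev P (fun w => above (sample w) B).
  apply: ev_forall => i; apply: ev_forall => j.
  by do 2!apply: ev_imp (ev_const _ _) _; apply: X_meas.
rewrite (@pr_as_eq _ P _ ev_no_ties pr_ties _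
           (fun w => exists B, p B /\ above (sample w) B) (ev_top m Q)).
- rewrite pr_sum //.
  move=> B B' w /andP [/eqP cB _] /andP [/eqP cB' _] BB' aB aB'.
  by move: BB'; rewrite (above_top aB) (above_top aB') cB cB' eqxx.
- apply: ev_exists => B; exact: ev_inter (ev_const _ _) (ev_above B).
move=> w nt; have [top_above top_card] := top_above nt mn.
split=> [QB|[B [/andP [/eqP cardB QB] /above_top]]].
  by exists (top (sample w) m); rewrite /p top_card eqxx QB.
by rewrite cardB => <-.
Qed.

Lemma ev_eq_minA A k : (1 <= k <= n)%N ->
  ev P (fun w => eq_minA X A (ostat X k w) w).
Proof.
move=> k_range; have ev_le i := ev_ostat_le i k_range; have ev_lt i := ev_ostat_lt i k_range.
have : ev P (fun w => (exists i, i \in A /\ (ostat X k w <= X i w /\ ~ ostat X k w < X i w))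
                      /\ forall j, j \in A -> ostat X k w <= X j w).
  apply: ev_inter; first apply: ev_exists => i.
    by apply: ev_inter (ev_const _ _) (ev_inter (ev_le i) (ev_compl (ev_lt i))).
  by apply: ev_forall => j; apply: ev_imp (ev_const _ _) (ev_le j).
apply: ev_ext => w; rewrite /eq_minA.
split=> -[[i [iA Xi]] minA]; split=> //; exists i; split=> //; lra.
Qed.

Lemma eq_minA_top A k w : no_ties (sample w) -> (1 <= k <= n)%N ->
  eq_minA X A (ostat X k w) w <->
  A \subset top (sample w) (n - k + 1) /\ ~~ (A \subset top (sample w) (n - k)).
Proof.
move=> nt k_range; rewrite /eq_minA; split.
  move=> [[i [iA Xi]] minA]; split.
    by apply/subsetP => j jA; apply/(ostat_le_top j nt k_range)/minA.
  apply/subsetPn; exists i => //; apply/negP => /(ostat_lt_top w i k_range); lra.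
move=> [/subsetP Atop /subsetPn [i iA not_top]]; split.
  exists i; split=> //; apply: Rle_antisym; last first.
    by apply/(ostat_le_top i nt k_range)/Atop.
  by apply: Rnot_lt_le => /(ostat_lt_top w i k_range); apply/negP.
by move=> j jA; apply/(ostat_le_top j nt k_range)/Atop.
Qed.

Lemma ostat_min_law A k : (1 <= k <= n)%N ->
  pr P (fun w => eq_minA X A (ostat X k w) w) =
    sumR (fun B : {set 'I_n} => (A \subset B) && (#|B| == n - k + 1)%N) (fun B => qA P X B)
  - sumR (fun B : {set 'I_n} => (A \subset B) && (#|B| == n - k)%N) (fun B => qA P X B).
Proof.
move=> k_range.
have sum_top m : (m <= n)%N ->
    sumR (fun B : {set 'I_n} => (A \subset B) && (#|B| == m)) (fun B => qA P X B) =
    pr P (fun w => A \subset top (sample w) m).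
  by move=> mn; rewrite (pr_top (fun S => A \subset S) mn); apply: eq_bigl => B; exact: andbC.
rewrite !sum_top; try lia.
have ev_sub m := ev_top m (fun S => A \subset S).
rewrite (@pr_as_eq _ P _ ev_no_ties pr_ties _
  (fun w => eq_minA X A (ostat X k w) w \/ A \subset top (sample w) (n - k)) (ev_sub _)).
- rewrite (pr_as_add ev_no_ties pr_ties (ev_eq_minA A k_range) (ev_sub _)); first lra.
  by move=> w nt /(eq_minA_top A nt k_range) [_ /negP].
- exact: ev_or (ev_eq_minA A k_range) (ev_sub _).
move=> w nt; rewrite (eq_minA_top A nt k_range).
rewrite addn1; case: (boolP (A \subset top (sample w) (n - k))) => sub_k.
  by split=> [_|_]; [right|exact: subset_trans sub_k (top_mono _ _)].
by split=> [sub_k1|[[]|]]; first by left.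
Qed.

Lemma lt_minA_top A k w : (1 <= k <= n)%N ->
  lt_minA X A (ostat X k w) w <-> A \subset top (sample w) (n - k).
Proof.
move=> k_range; split=> [A_alive|/subsetP A_top i iA].
  by apply/subsetP => i iA; apply/(ostat_lt_top w i k_range)/A_alive.
exact/(ostat_lt_top w i k_range)/A_top.
Qed.

Section Survival.
Variables (phi : {set 'I_n} -> bool) (T : Omega -> R).
Hypothesis phi_mono : forall A B : {set 'I_n}, A \subset B -> phi A -> phi B.
Hypothesis T_life : is_lifetime phi X T.
Hypothesis X_ge0 : forall i w, 0 <= X i w.

Lemma ostat_lt_lifetime k w : (1 <= k <= n)%N ->
  ostat X k w < T w <-> phi (top (sample w) (n - k)).
Proof.
move=> k_range.
have ostat_ge0 : 0 <= ostat X k w by exact: (@ost_nonneg n (sample w) k (X_ge0^~ w)).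
rewrite (lifetime_gt phi_mono (T_life w) ostat_ge0).
suff -> : [set i | Rltb (ostat X k w) (X i w)] = top (sample w) (n - k) by [].
apply/setP => i; rewrite inE; apply/RltbP/idP.
  by case: (ostat_lt_top w i k_range).
by case: (ostat_lt_top w i k_range).
Qed.

Lemma pr_survival_q k : (1 <= k <= n)%N ->
  pr P (fun w => ostat X k w < T w) =
  sumR (fun A : {set 'I_n} => #|A| == (n - k)%N) (fun A => qA P X A * b2R (phi A)).
Proof.
move=> k_range; rewrite (pr_ext _ (fun w => ostat_lt_lifetime w k_range)).
rewrite (pr_top phi (leq_subr k n)) /sumR big_mkcondr /=.
by apply: eq_bigr => B _; rewrite /b2R; case: (phi B); lra.
Qed.

(* Expanding phi by Moebius inversion expresses the survival probability
   through the laws of the events {X_{k:n} < min_A X}. *)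
Lemma pr_survival_mobius k : (1 <= k <= n)%N ->
  pr P (fun w => ostat X k w < T w) =
  sumR (fun A : {set 'I_n} => true)
       (fun A => mobius phi A * pr P (fun w => lt_minA X A (ostat X k w) w)).
Proof.
move=> k_range; rewrite pr_survival_q // /sumR.
under [RHS]eq_bigr => A _.
  rewrite (pr_ext _ (fun w => lt_minA_top A w k_range)).
  rewrite (pr_top (fun B => A \subset B) (leq_subr k n)) /sumR big_distrr /=.
  over.
rewrite (exchange_big_dep (fun B : {set 'I_n} => #|B| == (n - k)%N)) /=; last first.
  by move=> A B _ /andP [].
apply: eq_bigr => B cardB; rewrite -big_distrl /= Rmult_comm; congr (_ * _).
rewrite -(mobius_sum phi B); apply: eq_bigl => A; by rewrite cardB.
Qed.
End Survival.

End LifetimeOfOrderStatistics.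

Theorem mainTheorem6 (n : nat) (Omega : Type) (P : probSpace Omega)
    (X : 'I_n -> Omega -> R)
    (Hmeas : forall i j, ev P (fun w => X i w < X j w))
    (Hnonneg : forall i w, 0 <= X i w)
    (Hnoties : forall i j, i != j -> pr P (fun w => X i w = X j w) = 0) :
  (forall (A : {set 'I_n}) (k : nat), (1 <= k <= n)%N ->
     pr P (fun w => eq_minA X A (ostat X k w) w) =
       sumR (fun B : {set 'I_n} => (A \subset B) && (#|B| == n - k + 1)%N)
            (fun B => qA P X B)
     - sumR (fun B : {set 'I_n} => (A \subset B) && (#|B| == n - k)%N)
            (fun B => qA P X B))
  /\
  (forall (phi : {set 'I_n} -> bool) (T : Omega -> R),
     semicoherent phi -> is_lifetime phi X T ->
     forall k : nat, (1 <= k <= n)%N ->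
       pr P (fun w => ostat X k w < T w) =
         sumR (fun A : {set 'I_n} => #|A| == (n - k)%N)
              (fun A => qA P X A * b2R (phi A))
       /\
       pr P (fun w => ostat X k w < T w) =
         sumR (fun A : {set 'I_n} => true)
              (fun A => mobius phi A * pr P (fun w => lt_minA X A (ostat X k w) w))).
Proof.
split; first exact: ostat_min_law Hmeas Hnoties.
move=> phi T [phi_mono _] T_life k k_range; split.
- exact: (pr_survival_q Hmeas Hnoties phi_mono T_life Hnonneg k_range).
- exact: (pr_survival_mobius Hmeas Hnoties phi_mono T_life Hnonneg k_range).
Qed.
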